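(* Let $X$ be a non-trivial separated locally convex space with topology $\sigma(X,X^* )$, let $T$ be an arbitrary index set and let $f,g,h_t:X\to\overline{\mathbb{R}}$ ($t\in T$) be proper convex functions. Let $A=\{x\in X: h_t(x)\le 0\ \text{for all } t\in T\}$ and consider the primal problem $$(P)\qquad \inf_{x\in A}\{f(x)-g(x)\}$$ and the dual problem $$(\overline{D}_L)\qquad \sup_{\lambda\in\mathbb{R}^{(T)}_+}\ \inf_{(u^*,v^*,\gamma)\in W}\{g^c(u^*,v^*,\gamma)-(f+\lambda h)^c(u^*,v^*,\gamma)\}.$$ Suppose that $g$ has a proper e-convex minorant. If $(P)$ is solvable and there exists an optimal solution $x_0$ of $(P)$ at which $g$ is e-convex (i.e. $g(x_0)=g^{cc'}(x_0)$), then weak duality holds for $(P)$–$(\overline{D}_L)$, i.e. $v(P)\ge v(\overline{D}_L)$.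
   Context: $X^*$ is the topological dual of $X$, $\langle x,x^*\rangle$ the pairing, and $W:=X^*\times X^*\times\mathbb{R}$. The coupling function $c:X\times W\to\overline{\mathbb{R}}$ is $c(x,(x^*,y^*,\alpha))=\langle x,x^*\rangle$ if $\langle x,y^*\rangle<\alpha$ and $+\infty$ otherwise; $c':W\times X\to\overline{\mathbb{R}}$ is $c'((x^*,y^*,\alpha),x):=c(x,(x^*,y^*,\alpha))$. For $\varphi:X\to\overline{\mathbb{R}}$, $\varphi^c(w):=\sup_{x\in X}\{c(x,w)-\varphi(x)\}$ ($w\in W$); for $\psi:W\to\overline{\mathbb{R}}$, $\psi^{c'}(x):=\sup_{w\in W}\{c'(w,x)-\psi(w)\}$; $g^{cc'}:=(g^c)^{c'}$. In these expressions and in the dual objective the convention $(+\infty)+(-\infty)=(-\infty)+(+\infty)=(+\infty)-(+\infty)=(-\infty)-(-\infty)=-\infty$ is used. A set $C\subseteq X$ is e-convex if for every $x_0\notin C$ there is $x^*\in X^*$ with $\langle x-x_0,x^*\rangle<0$ for all $x\in C$; a function $X\to\overline{\mathbb{R}}$ is e-convex if its epigraph is an e-convex set. $\mathbb{R}^{(T)}_+$ is the set of families $\lambda=(\lambda_t)_{t\in T}$ with $\lambda_t\ge0$ and only finitely many $\lambda_t\neq0$, and $\lambda h:=\sum_{t:\lambda_t\ne0}\lambda_t h_t$. By convention $f(x)-g(x)=+\infty$ whenever $x\notin\operatorname{dom} f$. $v(\cdot)$ denotes the optimal value of a problem; $(P)$ is solvable if its infimum is attained. *)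

From HB Require Import structures.
From mathcomp Require Import all_boot all_order all_algebra.
From mathcomp Require Import all_classical all_reals ereal.
Set Implicit Arguments. Unset Strict Implicit. Unset Printing Implicit Defensive.
Import Order.TTheory GRing.Theory Num.Theory.
Local Open Scope ring_scope.
Local Open Scope classical_set_scope.
Local Open Scope ereal_scope.

(* Equipping X with
   sigma(X,Xs) makes it a separated locally convex space whose topological
   dual is (identified with) Xs; conversely every separated lcs with its
   weak topology sigma(X,X^* ) arises this way. *)
Definition dual_pair (R : realType) (X Xs : lmodType R) (pair : X -> Xs -> R) :=
  [/\ (forall (a : R) (x y : X) (xs : Xs),
          pair (a *: x + y)%R xs = (a * pair x xs + pair y xs)%R),
      (forall (a : R) (x : X) (xs ys : Xs),
          pair x (a *: xs + ys)%R = (a * pair x xs + pair x ys)%R),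
      (forall x : X, (forall xs, pair x xs = 0%R) -> x = 0%R) &
      (forall xs : Xs, (forall x, pair x xs = 0%R) -> xs = 0%R)].

Section Defs.
Variables (R : realType) (X Xs : lmodType R) (pair : X -> Xs -> R).

Definition W := (Xs * Xs * R)%type.

Definition cpl (x : X) (w : W) : \bar R :=
  let: (xs, ys, al) := w in
  if (pair x ys < al)%R then (pair x xs)%:E else +oo.
Definition cpl' (w : W) (x : X) : \bar R := cpl x w.

(* mathcomp's extended-real addition already follows the convention
   (+oo) + (-oo) = (-oo) + (+oo) = -oo, hence (+oo)-(+oo) = (-oo)-(-oo) = -oo. *)
Definition cconj (phi : X -> \bar R) (w : W) : \bar R :=
  ereal_sup [set cpl x w - phi x | x in [set: X]].
Definition cconj' (psi : W -> \bar R) (x : X) : \bar R :=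
  ereal_sup [set cpl' w x - psi w | w in [set: W]].
Definition cbiconj (g : X -> \bar R) : X -> \bar R := cconj' (cconj g).

(* e-convexity of a function (of its epigraph in X x R, whose dual is Xs x R):
   every point (x0,r0) outside epi g is strictly separated in the above sense. *)
Definition e_convex_fun (g : X -> \bar R) :=
  forall (x0 : X) (r0 : R), ~ (g x0 <= r0%:E) ->
    exists (xs : Xs) (be : R), forall (x : X) (r : R), g x <= r%:E ->
      (pair (x - x0)%R xs + (r - r0) * be < 0)%R.
End Defs.

Section Fun.
Variables (R : realType) (X : lmodType R).

Definition proper_fun (f : X -> \bar R) :=
  (forall x, -oo < f x) /\ (exists x, f x < +oo).

(* convexity = convexity of the epigraph {(x,r) | f x <= r} in X x R *)
Definition convex_fun (f : X -> \bar R) :=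
  forall (x y : X) (r s t : R), f x <= r%:E -> f y <= s%:E ->
    (0 <= t <= 1)%R ->
    f (t *: x + (1 - t) *: y)%R <= (t * r + (1 - t) * s)%:E.

Definition efdom (f : X -> \bar R) := [set x | f x < +oo].

Definition dcdiff (f g : X -> \bar R) (x : X) : \bar R :=
  if f x < +oo then f x - g x else +oo.

Definition Lambda (T : choiceType) : set (T -> R) :=
  [set l | (forall t, (0 <= l t)%R) /\ finite_set [set t | l t != 0%R]].

Definition f_plus_lh (T : choiceType) (f : X -> \bar R) (h : T -> X -> \bar R)
    (l : T -> R) (x : X) : \bar R :=
  f x + \sum_(t \in [set t | l t != 0%R]) ((l t)%:E * h t x).
End Fun.

From HB Require Import structures.
From mathcomp Require Import all_boot all_order all_algebra.
From mathcomp Require Import all_classical all_reals ereal.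
From mathcomp Require Import lra.
Set Implicit Arguments. Unset Strict Implicit. Unset Printing Implicit Defensive.
Import Order.TTheory GRing.Theory Num.Theory.
Local Open Scope ring_scope.
Local Open Scope classical_set_scope.
Local Open Scope ereal_scope.

(* Weak duality needs no convexity: for a feasible x0 and any multiplier l,
   F := f + l h satisfies F(x0) <= f(x0), and the Fenchel-Young inequality
   c(x0, w) - F(x0) <= F^c(w) gives, for every w,
     c(x0, w) - g^c(w) <= F(x0) - (g^c(w) - F^c(w)).
   Taking the supremum over w yields g^cc'(x0) <= F(x0) - inf_w (g^c - F^c),
   and g(x0) = g^cc'(x0) concludes.  The remaining hypotheses (dual pair,
   convexity, properness, e-convex minorant) are standing assumptions of the
   paper that this direction does not use. *)

Lemma lee_sub_subB (R : realType) (c G F : \bar R) (a : R) :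
  -oo < c -> c - a%:E <= F -> c - G <= a%:E - (G - F).
Proof.
case: c => [c| |] //; case: G => [G| |]; case: F => [F| |] //=;
  rewrite ?lee_fin ?leey ?leNye //=; lra.
Qed.

Section CouplingConjugate.
Variables (R : realType) (X Xs : lmodType R) (pair : X -> Xs -> R).

Lemma cpl_gtNy (x : X) (w : W Xs) : -oo < cpl pair x w.
Proof. by case: w => [[xs ys] al]; rewrite /cpl; case: ifP; rewrite ?ltNyr. Qed.

Lemma cconj_ge_cpl (phi : X -> \bar R) (x : X) (w : W Xs) :
  cpl pair x w - phi x <= cconj pair phi w.
Proof. by apply: ereal_sup_ubound; exists x. Qed.

Lemma ereal_inf_cconjB_le (phi psi : X -> \bar R) (x : X) : psi x < +oo ->
  ereal_inf [set cconj pair phi w - cconj pair psi w | w in [set: W Xs]]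
    <= psi x - cbiconj pair phi x.
Proof.
set I := ereal_inf _ => psix_lty.
have I_le w : I <= cconj pair phi w - cconj pair psi w.
  by apply: ereal_inf_lbound; exists w.
case psixE : (psi x) psix_lty => [a| |] // _.
- rewrite lee_suber_addl // addeC -lee_suber_addl //.
  apply: ge_ereal_sup => _ [w _ <-]; rewrite /cpl'.
  have young : cpl pair x w - a%:E <= cconj pair psi w.
    by rewrite -psixE; exact: cconj_ge_cpl.
  apply: le_trans (lee_sub_subB _ (cpl_gtNy x w) young) _.
  exact: leeB (lexx _) (I_le w).
- pose w0 : W Xs := (0, 0, 0)%R.
  have psi_w0 : cconj pair psi w0 = +oo.
    apply/eqP; rewrite -leye_eq; apply: le_trans (cconj_ge_cpl psi x w0).
    by rewrite psixE; case: (cpl pair x w0) (cpl_gtNy x w0).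
  by have := I_le w0; rewrite psi_w0 addeNy leeNy_eq => /eqP ->.
Qed.

End CouplingConjugate.

Lemma f_plus_lh_le (R : realType) (X : lmodType R) (T : choiceType)
    (f : X -> \bar R) (h : T -> X -> \bar R) (l : T -> R) (x : X) :
  Lambda l -> (forall t, h t x <= 0) -> f_plus_lh f h l x <= f x.
Proof.
move=> [l_ge0 _] hx_le0; rewrite /f_plus_lh -[leRHS]adde0; apply: leeD => //.
apply: fsume_le0 => t _.
by apply: mule_ge0_le0; [rewrite lee_fin | exact: hx_le0].
Qed.

Theorem proposition4p1 (R : realType) (X Xs : lmodType R)
  (pair : X -> Xs -> R) (T : choiceType)
  (f g : X -> \bar R) (h : T -> X -> \bar R) :
  dual_pair pair ->
  (exists x : X, x != 0%R) ->
  proper_fun f -> convex_fun f ->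
  proper_fun g -> convex_fun g ->
  (forall t, proper_fun (h t) /\ convex_fun (h t)) ->
  let A := [set x | forall t, h t x <= 0%E] in
  let vP := ereal_inf [set dcdiff f g x | x in A] in
  let vD := ereal_sup [set ereal_inf
                [set cconj pair g w - cconj pair (f_plus_lh f h l) w
                | w in [set: W Xs]]
             | l in @Lambda R T] in
  (exists m : X -> \bar R,
      proper_fun m /\ e_convex_fun pair m /\ (forall x, m x <= g x)) ->
  (exists x0, A x0 /\ dcdiff f g x0 = vP /\ g x0 = cbiconj pair g x0) ->
  vD <= vP.
Proof.
move=> _ _ _ _ _ _ _ A vP vD _ [x0 [Ax0 [<- gx0]]].
apply: ge_ereal_sup => _ [l Ll <-].
rewrite /dcdiff; case: ifPn => fx0_lty; last by rewrite leey.
have Fx0_le := f_plus_lh_le f Ll Ax0.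
apply: le_trans (ereal_inf_cconjB_le pair g (le_lt_trans Fx0_le fx0_lty)) _.
by rewrite -gx0; exact: leeB.
Qed.
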